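(* There is an absolute constant $C>0$ such that the following holds. Let $n\ge 2$, $L>0$, and let $f:[0,1]^n\to\mathbb{R}$ satisfy $|f(x)-f(y)|\le L\|x-y\|$ for all $x,y\in[0,1]^n$. Run the algorithm described in the context on $f$ for $T\ge 1$ queries, with values $f_t=f(P(x_t))$. Then the average regret satisfies $$r_T:=\frac1T\sum_{t=1}^T f_t-\min_{x\in[0,1]^n}f(x)\le C\,L\sqrt{n}\,T^{-1/n}.$$
   Context: Notation: $\|\cdot\|$ is the Euclidean norm; $\Omega=[0,1]^n$; $\theta=2^{1/n}$; $P:\mathbb{R}^n\to\Omega$ is the Euclidean projection onto $\Omega$ (coordinatewise clipping to $[0,1]$); $e_i$ is the $i$-th standard basis vector and $v(i)$ the $i$-th coordinate of $v$. The algorithm maintains a list of candidates, each a triple (center $x$, edge vector $v$, score $s$). Splitting rule: given an evaluated point $x_a$ with edge vector $v_a$ and value $f_a$, let $I$ be an index maximizing $v_a(i)$ over $i\in\{1,\dots,n\}$ (ties broken by smallest index), let $z=\tfrac{v_a(I)}{2}e_I$, and add to the list the two candidates $(x_a+z,\ v_a-z,\ f_a-L\|v_a\|)$ and $(x_a-z,\ v_a-z,\ f_a-L\|v_a\|)$. Initialization: $x_1=v_1=(\theta^{-1},\theta^{-2},\dots,\theta^{-n})$, $f_1=f(P(x_1))$, and apply the splitting rule to $(x_1,v_1,f_1)$. For each $t\ge 2$: remove from the list a candidate with the smallest score (ties arbitrary), call its center $x_t$ and edge vector $v_t$, evaluate $f_t=f(P(x_t))$, and apply the splitting rule to $(x_t,v_t,f_t)$.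 *)

From Stdlib Require Import Reals.
From mathcomp Require Import all_boot all_order all_algebra.
From mathcomp Require Import Rstruct.
Set Implicit Arguments. Unset Strict Implicit. Unset Printing Implicit Defensive.
Import Order.TTheory GRing.Theory Num.Theory.
Local Open Scope ring_scope.

Definition vec (n : nat) := 'I_n -> R.

Definition enorm n (x : vec n) : R := Num.sqrt (\sum_(i < n) x i ^+ 2).

Definition in_cube n (x : vec n) : Prop := forall i, 0 <= x i <= 1.

(* Euclidean projection onto [0,1]^n : coordinatewise clipping *)
Definition proj n (x : vec n) : vec n := fun i => Num.max 0 (Num.min 1 (x i)).

Definition rpow (a b : R) : R := Rpower a b.

Definition theta (n : nat) : R := rpow 2 (n%:R)^-1.

(* initial point x_1 = v_1 = (theta^-1, ..., theta^-n) ; index i : 'I_n is coordinate i+1 *)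
Definition v_init n : vec n := fun i => theta n ^- (i.+1).

(* a candidate: ((center, edge vector), score) *)
Definition cand n := ((vec n * vec n) * R)%type.

Definition split_index n (v : vec n) (I : 'I_n) : Prop :=
  (forall j, v j <= v I) /\ (forall j : 'I_n, (j < I)%N -> v j < v I).

Definition zvec n (v : vec n) (I : 'I_n) : vec n :=
  fun i => if i == I then v I / 2 else 0.

Definition children n (L : R) (x v : vec n) (fa : R) (I : 'I_n) : seq (cand n) :=
  [:: ((fun i => x i + zvec v I i, fun i => v i - zvec v I i), fa - L * enorm v);
      ((fun i => x i - zvec v I i, fun i => v i - zvec v I i), fa - L * enorm v)].

(* A (possibly nondeterministic, ties arbitrary) run of the algorithm for T queries:
   xs t, vs t are the center and edge vector of the t-th query (t = 1..T), and
   Ls t is the candidate list after step t (after splitting). *)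
Definition is_run n (L : R) (f : vec n -> R) (T : nat)
    (xs vs : nat -> vec n) (Ls : nat -> seq (cand n)) : Prop :=
  xs 1%N = @v_init n /\ vs 1%N = @v_init n /\
  (exists I, split_index (vs 1%N) I /\
     Ls 1%N = children L (xs 1%N) (vs 1%N) (f (proj (xs 1%N))) I) /\
  (forall t : nat, (2 <= t <= T)%N ->
     exists (l1 l2 : seq (cand n)) (s : R) (I : 'I_n),
       Ls t.-1 = l1 ++ ((xs t, vs t), s) :: l2 /\
       all (fun c : cand n => s <= c.2) (l1 ++ l2) /\
       split_index (vs t) I /\
       Ls t = l1 ++ l2 ++ children L (xs t) (vs t) (f (proj (xs t))) I).

(* A candidate created by [e] halvings of the initial box has edges of ratio at most 2 and
   volume at most 2^-e, hence longest edge at most 2 th^-e; its score, the Lipschitz lower bound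
   inherited from its parent, is then within K th^-e of the value at its own centre, where
   K = 4 L sqrt n th.  Scores are lower bounds on f over their boxes and some box always contains
   the minimiser xstar, so the smallest score is at most f xstar and a query at depth e has regret
   at most K th^-e.  Choosing 2^D <= T < 2^(D+1), a potential on depths pays for queries of depth
   at most D, each deeper query costs at most K th^-(D+1) <= K T^(-1/n), and the initial potential
   is O(2^D th^-D) = O(T^(1-1/n)). *)

From Stdlib Require Import Reals FunctionalExtensionality.
From Stdlib Require List.
From mathcomp Require Import all_boot all_order all_algebra.
From mathcomp Require Import Rstruct.
From mathcomp Require Import ring lra.
Import Order.TTheory GRing.Theory Num.Theory.
Local Open Scope ring_scope.
Set Implicit Arguments. Unset Strict Implicit.

Lemma rpow_gt0 x y : 0 < rpow x y.
Proof. by apply/RltP; rewrite /rpow /Rpower; apply: exp_pos. Qed.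

Lemma rpow_exprn x y k : 0 < x -> rpow x y ^+ k = rpow x (y * k%:R).
Proof.
move=> x0; rewrite -RpowE -Rpower_pow; last by apply/RltP; exact: rpow_gt0.
by rewrite /rpow Rpower_mult INRE.
Qed.

Lemma mulVnat n : (0 < n)%N -> (n%:R : R)^-1 * n%:R = 1.
Proof. by move=> n0; rewrite mulVf // pnatr_eq0 -lt0n. Qed.

Lemma theta_exprn n : (0 < n)%N -> theta n ^+ n = 2.
Proof.
move=> n0; have two_gt0 : 0 < 2 :> R by [].
rewrite /theta rpow_exprn // [X in rpow _ X](_ : _ = 1); last exact: mulVnat.
by rewrite /rpow Rpower_1 //; apply/RltP.
Qed.

Lemma rpow_Ninv_exprn n T : (0 < n)%N -> (0 < T)%N ->
  rpow (T%:R) (- (n%:R)^-1) ^+ n * T%:R = 1.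
Proof.
move=> n0 T0; rewrite rpow_exprn ?ltr0n // [X in rpow _ X](_ : _ = -1); last first.
  by rewrite -[RHS](congr1 -%R (mulVnat n0)) -mulNr.
rewrite /rpow Rpower_Ropp Rpower_1 ?RinvE; last by apply/RltP; rewrite ltr0n.
by rewrite mulVf // pnatr_eq0 -lt0n.
Qed.

Lemma clip01_dist_le (a b : R) :
  `|Num.max 0 (Num.min 1 a) - Num.max 0 (Num.min 1 b)| <= `|a - b|.
Proof.
rewrite !minEle !maxEle.
have := ler_norml (a - b) `|a - b|; rewrite lexx => /esym/andP[h1 h2].
case: (leP 1 a) => ?; case: (leP 1 b) => ?; rewrite ?ler01;
case: (leP 0 a) => ?; case: (leP 0 b) => ?;
rewrite ?subrr ?normr0 ?normr_ge0 //; rewrite ?ler_norml; try (apply/andP; split); lra.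
Qed.

Lemma enorm_le n (a b : vec n) : (forall i, `|a i| <= `|b i|) -> enorm a <= enorm b.
Proof.
move=> le_ab; rewrite /enorm ler_sqrt; last by apply: sumr_ge0 => i _; exact: sqr_ge0.
apply: ler_sum => i _; rewrite -(real_normK (num_real (a i))) -(real_normK (num_real (b i))).
by apply: lerXn2r; rewrite ?nnegrE ?normr_ge0.
Qed.

Lemma enorm_le_max n (v : vec n) (I : 'I_n) :
  (forall i, 0 <= v i) -> (forall j, v j <= v I) -> enorm v <= Num.sqrt (n%:R) * v I.
Proof.
move=> v_ge0 v_max; rewrite /enorm -(ger0_norm (v_ge0 I)) -sqrtr_sqr -sqrtrM ?ler0n //.
rewrite ler_sqrt; last by rewrite mulr_ge0 ?ler0n ?sqr_ge0.
have -> : n%:R * v I ^+ 2 = \sum_(i < n) v I ^+ 2 by rewrite sumr_const card_ord mulr_natl.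
by apply: ler_sum => i _; apply: lerXn2r; rewrite ?nnegrE.
Qed.

Lemma in_cube_proj n (x : vec n) : in_cube (proj x).
Proof.
move=> i; rewrite /proj; apply/andP; split; first by rewrite le_max lexx.
by rewrite ge_max ler01 ge_min lexx.
Qed.

Lemma proj_id n (y : vec n) : in_cube y -> proj y = y.
Proof.
move=> y_cube; apply: functional_extensionality_dep => i.
by case/andP: (y_cube i) => y0 y1; rewrite /proj (min_r y1) (max_r y0).
Qed.

Definition in_box n (y x v : vec n) := forall i, `|y i - x i| <= v i.

Section Lipschitz.
Variables (n : nat) (L : R) (f : vec n -> R).
Hypothesis L_gt0 : 0 < L.
Hypothesis f_lip : forall x y : vec n, in_cube x -> in_cube y ->
  `|f x - f y| <= L * enorm (fun i => x i - y i).

Lemma lipschitz_proj (x y : vec n) :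
  `|f (proj x) - f (proj y)| <= L * enorm (fun i => x i - y i).
Proof.
apply: (le_trans (f_lip (in_cube_proj x) (in_cube_proj y))).
by rewrite ler_pM2l //; apply: enorm_le => i; exact: clip01_dist_le.
Qed.

Lemma lipschitz_box_lower (x v y : vec n) : in_cube y -> in_box y x v ->
  f (proj x) - L * enorm v <= f y.
Proof.
move=> y_cube y_box.
have le_xy : L * enorm (fun i => x i - y i) <= L * enorm v.
  rewrite ler_pM2l //; apply: enorm_le => i; rewrite distrC.
  exact: le_trans (y_box i) (ler_norm _).
have := le_trans (ler_norm _) (lipschitz_proj x y); rewrite (proj_id y_cube) => le_f.
lra.
Qed.

End Lipschitz.

Definition shaped n (e : nat) (v : vec n) :=
  [/\ forall i, 0 < v i, forall i j, v i <= 2 * v j & \prod_i v i * 2 ^+ e <= 1].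

Lemma zvec_ge0 n (v : vec n) I i : (forall i, 0 < v i) -> 0 <= zvec v I i.
Proof. by move=> v_gt0; rewrite /zvec; case: eqP => _ //; have := v_gt0 I; lra. Qed.

Lemma zvec_le n (v : vec n) I i : (forall i, 0 < v i) -> zvec v I i <= v i.
Proof.
by move=> v_gt0; rewrite /zvec; case: eqP => [->|_]; have := v_gt0 I; have := v_gt0 i; lra.
Qed.

Lemma shaped_split n e (v : vec n) I : split_index v I -> shaped e v ->
  shaped e.+1 (fun i => v i - zvec v I i).
Proof.
case=> v_max _ [v_gt0 v_ratio v_vol]; split.
- by move=> i; rewrite /zvec; case: eqP => [->|_]; have := v_gt0 I; have := v_gt0 i; lra.
- move=> i j; rewrite /zvec; case: eqP => [->|_]; case: eqP => [->|_];
  have := v_gt0 I; have := v_gt0 i; have := v_gt0 j; have := v_max i; have := v_max j;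
  have := v_ratio i j; have := v_ratio I j; lra.
- suff -> : \prod_i (v i - zvec v I i) * 2 ^+ e.+1 = \prod_i v i * 2 ^+ e by [].
  rewrite (bigD1 I) //= [in RHS](bigD1 I) //=.
  rewrite (eq_bigr v) => [|i /negPf iI]; last by rewrite /zvec iI subr0.
  by rewrite /zvec eqxx exprS; field.
Qed.

Section Root2.
Variables (n : nat) (th : R).
Hypotheses (n_gt0 : (0 < n)%N) (thn : th ^+ n = 2) (th_gt0 : 0 < th).

Lemma root2_ge1 : 1 <= th.
Proof. by rewrite -(expr_ge1 n_gt0) ?(ltW th_gt0) // thn; lra. Qed.

Lemma root2_le3half : (2 <= n)%N -> 2 * th <= 3.
Proof.
move=> n_ge2; have : th ^+ 2 <= th ^+ n by apply: ler_weXn2l => //; exact: root2_ge1.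
by rewrite thn expr2 => th2_le2; have := root2_ge1; nra.
Qed.

Lemma root2_invX_le1 k : th ^- k <= 1.
Proof. by rewrite invf_le1 ?exprn_gt0 //; apply: exprn_ege1; exact: root2_ge1. Qed.

Lemma root2_invX_ge_half k : (k <= n)%N -> 1 <= 2 * th ^- k.
Proof.
move=> k_le_n; have thk_le2 : th ^+ k <= 2.
  by rewrite -thn; apply: ler_weXn2l => //; exact: root2_ge1.
have thk_gt0 := exprn_gt0 k th_gt0.
by rewrite -(ler_pM2r thk_gt0) mul1r -mulrA mulVf ?mulr1 ?gt_eqF.
Qed.

Lemma shaped_max_le e (v : vec n) (I : 'I_n) :
  shaped e v -> (forall j, v j <= v I) -> v I * th ^+ e <= 2.
Proof.
case=> v_gt0 v_ratio v_vol v_max.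
rewrite -(ler_pXn2r n_gt0) ?nnegrE ?mulr_ge0 ?exprn_ge0 ?(ltW th_gt0) ?(ltW (v_gt0 I)) //.
rewrite exprMn -exprM mulnC exprM thn.
have vIn_le : v I ^+ n <= 2 ^+ n * \prod_i v i.
  have -> : v I ^+ n = \prod_(i < n) v I by rewrite prodr_const card_ord.
  have -> : 2 ^+ n = \prod_(i < n) 2 :> R by rewrite prodr_const card_ord.
  rewrite -big_split /=; apply: ler_prod => i _.
  by rewrite (ltW (v_gt0 I)) /= v_ratio.
apply: (le_trans (ler_wpM2r (exprn_ge0 e (ler0n R 2)) vIn_le)).
by rewrite -mulrA -[X in _ <= X]mulr1 ler_wpM2l // exprn_ge0.
Qed.

Lemma shaped_init : shaped 0 (fun i : 'I_n => th ^- i.+1).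
Proof.
split.
- by move=> i; rewrite invr_gt0 exprn_gt0.
- move=> i j; apply: (le_trans (root2_invX_le1 i.+1)).
  exact: root2_invX_ge_half (ltn_ord j).
- rewrite expr0 mulr1; apply: prodr_ile1 => i _.
  by rewrite invr_ge0 exprn_ge0 ?(ltW th_gt0) ?root2_invX_le1.
Qed.

Lemma in_box_init (y : vec n) : in_cube y ->
  in_box y (fun i : 'I_n => th ^- i.+1) (fun i : 'I_n => th ^- i.+1).
Proof.
move=> y_cube i; have /andP[y0 y1] := y_cube i.
have := root2_invX_ge_half (ltn_ord i).
by rewrite ler_norml => ?; apply/andP; split; lra.
Qed.

End Root2.

Section Candidates.
Variables (n : nat) (L : R) (f : vec n -> R) (th : R) (xstar : vec n).
Hypothesis L_gt0 : 0 < L.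
Hypothesis f_lip : forall x y : vec n, in_cube x -> in_cube y ->
  `|f x - f y| <= L * enorm (fun i => x i - y i).
Hypotheses (n_gt0 : (0 < n)%N) (thn : th ^+ n = 2) (th_gt0 : 0 < th).
Hypothesis xstar_cube : in_cube xstar.

Definition good_cand (e : nat) (c : cand n) : Prop :=
  [/\ shaped e c.1.2,
      f (proj c.1.1) - c.2 <= 4 * L * Num.sqrt (n%:R) * th * th ^- e
    & in_box xstar c.1.1 c.1.2 -> c.2 <= f xstar].

Lemma child_good e (x xc v : vec n) I : split_index v I -> shaped e v ->
  (forall i, `|xc i - x i| <= zvec v I i) ->
  good_cand e.+1 ((xc, fun i => v i - zvec v I i), f (proj x) - L * enorm v).
Proof.
move=> v_split v_shaped xc_near; have [v_max _] := v_split; have [v_gt0 _ _] := v_shaped.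
split => /=.
- exact: shaped_split.
- have xc_x : enorm (fun i => xc i - x i) <= enorm v.
    apply: enorm_le => i; apply: (le_trans (xc_near i)).
    by rewrite ger0_norm ?(ltW (v_gt0 i)) // zvec_le.
  have f_xc := le_trans (ler_norm _) (lipschitz_proj L_gt0 f_lip xc x).
  have vI_le : v I <= 2 * th ^- e.
    have := shaped_max_le n_gt0 thn th_gt0 v_shaped v_max.
    by rewrite -ler_pdivlMr ?exprn_gt0.
  have v_le : enorm v <= Num.sqrt n%:R * (2 * th ^- e).
    apply: (le_trans (enorm_le_max (fun i => ltW (v_gt0 i)) v_max)).
    by rewrite ler_wpM2l ?sqrtr_ge0.
  have -> : 4 * L * Num.sqrt n%:R * th * th ^- e.+1 = 4 * L * Num.sqrt n%:R * th ^- e.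
    by rewrite exprS invfM -!mulrA [th * (_ * _)]mulrA mulfV ?mul1r // gt_eqF.
  have := ler_wpM2l (ltW L_gt0) xc_x; have := ler_wpM2l (ltW L_gt0) v_le; lra.
- move=> xstar_box; apply: (lipschitz_box_lower L_gt0 f_lip) => // i.
  have := xstar_box i; have := xc_near i; have := ler_distD (xc i) (xstar i) (x i).
  lra.
Qed.

Lemma children_good e (x v : vec n) I : split_index v I -> shaped e v ->
  List.Forall2 good_cand [:: e.+1; e.+1] (children L x v (f (proj x)) I).
Proof.
move=> v_split v_shaped; have [v_gt0 _ _] := v_shaped.
by constructor; [|constructor; [|constructor]]; apply: child_good => // i;
  have := zvec_ge0 I i v_gt0; rewrite addrAC subrr add0r ?normrN => ?; rewrite ger0_norm.
Qed.

Lemma children_cover (x v : vec n) I fa : (forall i, 0 < v i) -> in_box xstar x v ->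
  exists2 c, List.In c (children L x v fa I) & in_box xstar c.1.1 c.1.2.
Proof.
move=> v_gt0 xstar_box; have := v_gt0 I; have := xstar_box I.
rewrite ler_norml => /andP[? ?] ?.
case: (leP (x I) (xstar I)) => ?; [exists (head ((x, v), 0) (children L x v fa I)); first by left
  | exists (last ((x, v), 0) (children L x v fa I)); first by right; left];
by move=> i /=; have := xstar_box i; rewrite /zvec; case: eqP => [->|_];
  rewrite ?addr0 ?subr0 // !ler_norml => /andP[? ?]; apply/andP; split; lra.
Qed.

Lemma cover_after_split (l1 l2 : seq (cand n)) x v s I c :
  (forall i, 0 < v i) -> List.In c (l1 ++ ((x, v), s) :: l2) -> in_box xstar c.1.1 c.1.2 ->
  exists2 c', List.In c' (l1 ++ l2 ++ children L x v (f (proj x)) I) & in_box xstar c'.1.1 c'.1.2.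
Proof.
move=> v_gt0 /(List.in_app_or _ _ _)[c_in | [<- | c_in]] c_box.
- by exists c => //; apply: List.in_or_app; left.
- have [c' c'_in c'_box] := children_cover I (f (proj x)) v_gt0 c_box.
  by exists c' => //; do 2!(apply: List.in_or_app; right).
- by exists c => //; apply: List.in_or_app; right; apply: List.in_or_app; left.
Qed.

End Candidates.

(* [potential th D e = th^-e + 2 * potential th D e.+1] for [e <= D], and the potential vanishes
   from depth [D.+1] on: a query at depth [e] is paid for by replacing its potential with that of
   its two children, up to [th^-D.+1], which also bounds the cost of a query deeper than [D]. *)
Definition potential (th : R) (D e : nat) :=
  th ^- D * (2 ^+ (D.+1 - e) - th ^+ (D.+1 - e)) / (2 - th).

Section Potential.
Variables (th : R) (D : nat).

Lemma potential_ge0 e : 1 <= th -> 2 * th <= 3 -> 0 <= potential th D e.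
Proof.
move=> th_ge1 th_le; rewrite /potential; apply: divr_ge0; last lra.
apply: mulr_ge0; first by rewrite invr_ge0 exprn_ge0 //; lra.
by rewrite subr_ge0; apply: lerXn2r; rewrite ?nnegrE; lra.
Qed.

Lemma potential_split e : 1 <= th -> 2 * th <= 3 ->
  th ^- e <= potential th D e - 2 * potential th D e.+1 + th ^- D.+1.
Proof.
move=> th_ge1 th_le; have th_gt0 : 0 < th by lra.
have thD_ge0 : 0 <= th ^- D.+1 by rewrite invr_ge0 exprn_ge0 //; lra.
case: (leqP e D) => [e_le|D_lt].
- rewrite /potential subSn // subSS -[in th ^- D](subnKC e_le) exprD invfM.
  set k := (D - e)%N.
  have -> : th ^- e * th ^- k * (2 ^+ k.+1 - th ^+ k.+1) / (2 - th) -
      2 * (th ^- e * th ^- k * (2 ^+ k - th ^+ k) / (2 - th)) = th ^- e.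
    by rewrite !exprS; field; rewrite ?expf_neq0 ?gt_eqF //; lra.
  lra.
- rewrite /potential; have /eqP -> : (D.+1 - e == 0)%N by rewrite subn_eq0.
  have /eqP -> : (D.+1 - e.+1 == 0)%N by rewrite subn_eq0 ltnW.
  rewrite !expr0 subrr mulr0 mul0r mulr0 subr0 add0r.
  by rewrite lef_pV2 ?posrE ?exprn_gt0 //; exact: ler_weXn2l.
Qed.

Lemma potential1_le : 1 <= th -> 2 * th <= 3 ->
  2 * potential th D 1 <= 4 * (2 ^+ D * th ^- D).
Proof.
move=> th_ge1 th_le; rewrite /potential subSS subn0.
set A := th ^- D * (2 ^+ D - th ^+ D).
have thD_ge0 : 0 <= th ^- D by rewrite invr_ge0 exprn_ge0 //; lra.
have A_ge0 : 0 <= A.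
  by apply: mulr_ge0 => //; rewrite subr_ge0; apply: lerXn2r; rewrite ?nnegrE; lra.
have A_le : A <= 2 ^+ D * th ^- D.
  by rewrite /A mulrC ler_wpM2r // lerBlDr lerDl exprn_ge0 //; lra.
have : A / (2 - th) <= 2 * A.
  by rewrite ler_pdivrMr; [have := mulr_ge0 A_ge0 (_ : 0 <= 2 * (2 - th) - 1); lra | lra].
lra.
Qed.

End Potential.

Section Lists.
Variables (A B : Type).

Lemma all_In (p : pred A) l x : all p l -> List.In x l -> p x.
Proof. by elim: l => //= y l IH /andP[py pl] [<-|x_in] //; exact: IH. Qed.

Lemma In_app_cons_le (s : A -> R) l1 l2 a b :
  all (fun d => s a <= s d) (l1 ++ l2) -> List.In b (l1 ++ a :: l2) -> s a <= s b.
Proof.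
move=> a_min /(List.in_app_or _ _ _)[b_in | [<- // | b_in]]; apply: (all_In a_min);
  apply: List.in_or_app; [left | right] => //.
Qed.

Lemma Forall2_In_r (P : B -> A -> Prop) ds l c :
  List.Forall2 P ds l -> List.In c l -> exists e, P e c.
Proof. by elim=> //= e c' ds' l' Pe _ IH [<-|c_in]; [exists e | exact: IH]. Qed.

Lemma Forall2_app_cons_inv_r (P : B -> A -> Prop) ds l1 c l2 :
  List.Forall2 P ds (l1 ++ c :: l2) ->
  exists d1 e d2, [/\ ds = d1 ++ e :: d2, List.Forall2 P d1 l1, P e c & List.Forall2 P d2 l2].
Proof.
move=> /List.Forall2_app_inv_r[d1 [[|e d2] [P1 [P2 ->]]]]; first by inversion P2.
have [Pe P2'] : P e c /\ List.Forall2 P d2 l2 by inversion P2.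
by exists d1, e, d2.
Qed.

End Lists.

Section Regret.
Variables (n : nat) (L : R) (f : vec n -> R) (D T : nat) (xstar : vec n).
Variables (xs vs : nat -> vec n) (Ls : nat -> seq (cand n)).
Hypotheses (n_ge2 : (2 <= n)%N) (L_gt0 : 0 < L).
Hypothesis f_lip : forall x y : vec n, in_cube x -> in_cube y ->
  `|f x - f y| <= L * enorm (fun i => x i - y i).
Hypotheses (xstar_cube : in_cube xstar) (run : is_run L f T xs vs Ls).

Local Notation th := (theta n).
Local Notation K := (4 * L * Num.sqrt n%:R * theta n).

Let n_gt0 : (0 < n)%N. Proof. exact: leq_trans n_ge2. Qed.
Let thn : th ^+ n = 2. Proof. exact: theta_exprn. Qed.
Let th_gt0 : 0 < th. Proof. exact: rpow_gt0. Qed.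
Let th_ge1 : 1 <= th. Proof. exact: root2_ge1 n_gt0 thn th_gt0. Qed.
Let th_le : 2 * th <= 3. Proof. exact: root2_le3half n_gt0 thn th_gt0 n_ge2. Qed.
Let K_ge0 : 0 <= K. Proof. by rewrite !mulr_ge0 ?sqrtr_ge0 ?(ltW L_gt0) ?(ltW th_gt0). Qed.

Definition regret_invariant (t : nat) : Prop := exists ds : seq nat,
  [/\ List.Forall2 (good_cand L f th xstar) ds (Ls t),
      exists2 c, List.In c (Ls t) & in_box xstar c.1.1 c.1.2
    & \sum_(1 <= s < t.+1) (f (proj (xs s)) - f xstar) + K * \sum_(e <- ds) potential th D e
      <= L * Num.sqrt n%:R + K * (2 * potential th D 1) + (t%:R - 1) * (K * th ^- D.+1)].

Lemma regret_invariant1 : regret_invariant 1.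
Proof.
case: run => x1 [v1 [[I [I_split L1]] _]].
have v1_shaped : shaped 0 (vs 1%N) by rewrite v1; exact: shaped_init.
have [v1_gt0 _ _] := v1_shaped.
have xstar_box : in_box xstar (xs 1%N) (vs 1%N) by rewrite x1 v1; exact: in_box_init.
exists [:: 1; 1]%N; rewrite L1; split.
- exact: children_good.
- exact: children_cover.
have f1_le := lipschitz_box_lower L_gt0 f_lip xstar_cube xstar_box.
have v1_le : L * enorm (vs 1%N) <= L * Num.sqrt n%:R.
  rewrite ler_pM2l //; have [v1_max _] := I_split.
  apply: (le_trans (enorm_le_max (fun i => ltW (v1_gt0 i)) v1_max)).
  by rewrite -[X in _ <= X]mulr1 ler_wpM2l ?sqrtr_ge0 // v1 (root2_invX_le1 n_gt0 thn th_gt0).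
rewrite big_nat1 !big_cons big_nil subrr mul0r addr0.
lra.
Qed.

Lemma regret_invariant_step t : (1 <= t < T)%N -> regret_invariant t -> regret_invariant t.+1.
Proof.
move=> /andP[t_ge1 t_lt] [ds [ds_good [c c_in c_box] sum_le]].
have t_range : (2 <= t.+1 <= T)%N by rewrite ltnS t_ge1.
case: run => _ [_ [_ /(_ t.+1 t_range)[l1 [l2 [s [I [/= Lt [s_min [I_split Lt1]]]]]]]]].
rewrite Lt in ds_good c_in.
have [d1 [e [d2 [ds_eq d1_good [e_shaped e_gap _] d2_good]]]] := Forall2_app_cons_inv_r ds_good.
have s_le : s <= f xstar.
  have [e' [_ _ c_lb]] := Forall2_In_r ds_good c_in.
  apply: le_trans _ (c_lb c_box).
  exact: (In_app_cons_le (s := fun c : cand n => c.2) (a := ((xs t.+1, vs t.+1), s)) s_min c_in).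
exists (d1 ++ d2 ++ [:: e.+1; e.+1]); rewrite Lt1; split.
- apply: List.Forall2_app => //; apply: List.Forall2_app => //.
  exact: children_good.
- have [v_gt0 _ _] := e_shaped; exact: cover_after_split c_in c_box.
rewrite /= in e_gap; rewrite ds_eq big_cat big_cons /= in sum_le.
have -> : t.+1%:R = t%:R + 1 :> R by rewrite natr1.
rewrite big_nat_recr //= !big_cat !big_cons big_nil /=.
have := ler_wpM2l K_ge0 (potential_split D e th_ge1 th_le).
lra.
Qed.

Lemma regret_invariant_le t : (1 <= t <= T)%N -> regret_invariant t.
Proof.
elim: t => // t IH /andP[_ t_lt].
case: (posnP t) => [-> | t_gt0]; first exact: regret_invariant1.
apply: regret_invariant_step; first by rewrite t_gt0.
by apply: IH; rewrite t_gt0 ltnW.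
Qed.

Lemma regret_sum_le : (1 <= T)%N ->
  \sum_(1 <= t < T.+1) (f (proj (xs t)) - f xstar)
    <= L * Num.sqrt n%:R + K * (2 * potential th D 1) + (T%:R - 1) * (K * th ^- D.+1).
Proof.
move=> T_ge1; have [ds [_ _ sum_le]] : regret_invariant T.
  by apply: regret_invariant_le; rewrite T_ge1 leqnn.
have : 0 <= K * \sum_(e <- ds) potential th D e.
  by rewrite mulr_ge0 // sumr_ge0 // => e _; exact: potential_ge0.
lra.
Qed.

End Regret.

Section Budget.
Variables (m T D : nat) (th w : R).
Hypotheses (T_ge1 : (1 <= T)%N) (D_lb : (2 ^ D <= T)%N) (D_ub : (T <= 2 ^ D.+1)%N).
Hypotheses (thn : th ^+ m.+1 = 2) (th_gt0 : 0 < th).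
Hypotheses (wn : w ^+ m.+1 * T%:R = 1) (w_gt0 : 0 < w).

Let T_gt0 : 0 < T%:R :> R. Proof. by rewrite ltr0n. Qed.

Lemma Tw_exprn : (T%:R * w) ^+ m.+1 = T%:R ^+ m.
Proof. by rewrite exprMn exprSr -mulrA [T%:R * _]mulrC wn mulr1. Qed.

Lemma Tw_ge1 : 1 <= T%:R * w.
Proof.
rewrite -(ler_pXn2r (ltn0Sn m)) ?nnegrE ?mulr_ge0 ?ler0n ?(ltW w_gt0) // expr1n Tw_exprn.
by apply: exprn_ege1; rewrite ler1n.
Qed.

Lemma dyadic_le_Tw : 2 ^+ D * th ^- D <= T%:R * w.
Proof.
have thD_gt0 : 0 < th ^- D by rewrite invr_gt0 exprn_gt0.
rewrite -(ler_pXn2r (ltn0Sn m)) ?nnegrE ?mulr_ge0 ?ler0n ?(ltW w_gt0) ?(ltW thD_gt0) ?exprn_ge0 //.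
have thDn : (th ^- D) ^+ m.+1 = (2 ^+ D)^-1 by rewrite exprVn -exprM mulnC exprM thn.
rewrite Tw_exprn exprMn thDn exprSr -mulrA mulfV ?mulr1 ?expf_neq0 ?gt_eqF //.
by apply: lerXn2r; rewrite ?nnegrE ?exprn_ge0 ?ler0n // -natrX ler_nat.
Qed.

Lemma root2_invX_le_w : th ^- D.+1 <= w.
Proof.
have thD_gt0 : 0 < th ^- D.+1 by rewrite invr_gt0 exprn_gt0.
rewrite -(ler_pXn2r (ltn0Sn m)) ?nnegrE ?(ltW w_gt0) ?(ltW thD_gt0) //.
rewrite exprVn -exprM mulnC exprM thn.
have -> : w ^+ m.+1 = (T%:R)^-1 by apply: (mulIf (lt0r_neq0 T_gt0)); rewrite wn mulVf ?lt0r_neq0.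
by rewrite lef_pV2 ?posrE ?exprn_gt0 // -natrX ler_nat.
Qed.

Lemma regret_budget_le (L S : R) : 0 <= L -> 0 <= S -> 1 <= th -> 2 * th <= 3 ->
  L * S + 4 * L * S * th * (2 * potential th D 1) + (T%:R - 1) * (4 * L * S * th * th ^- D.+1)
    <= T%:R * (31 * L * S * w).
Proof.
move=> L_ge0 S_ge0 th_ge1 th_le.
have LS_ge0 : 0 <= L * S by apply: mulr_ge0.
have K_ge0 : 0 <= 4 * L * S * th by rewrite !mulr_ge0 // (le_trans ler01).
have K_le : 4 * L * S * th <= 6 * (L * S).
  by have := mulr_ge0 LS_ge0 (_ : 0 <= 3 - 2 * th); lra.
have thD_ge0 : 0 <= th ^- D.+1 by rewrite invr_ge0 exprn_ge0 // ltW.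
have pot_le : 2 * potential th D 1 <= 4 * (T%:R * w).
  by have := potential1_le D th_ge1 th_le; have := dyadic_le_Tw; lra.
have pot_ge0 : 0 <= 2 * potential th D 1 by rewrite mulr_ge0 // potential_ge0.
have first_le : L * S <= L * S * (T%:R * w) := ler_peMr LS_ge0 Tw_ge1.
have root_le : 4 * L * S * th * (2 * potential th D 1) <= 6 * (L * S) * (4 * (T%:R * w)).
  exact: ler_pM K_ge0 pot_ge0 K_le pot_le.
have tail_le : (T%:R - 1) * (4 * L * S * th * th ^- D.+1) <= T%:R * (6 * (L * S) * w).
  have T_ge1' : 1 <= T%:R :> R by rewrite ler1n.
  apply: ler_pM; [lra | exact: mulr_ge0 | lra | exact: ler_pM K_ge0 thD_ge0 K_le root2_invX_le_w].
lra.
Qed.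

End Budget.

Lemma mean_sub_le (T : nat) (a : nat -> R) (b c : R) : (0 < T)%N ->
  \sum_(1 <= t < T.+1) (a t - b) <= T%:R * c ->
  (T%:R)^-1 * (\sum_(1 <= t < T.+1) a t) - b <= c.
Proof.
move=> T_gt0 sum_le; have T_pos : 0 < T%:R :> R by rewrite ltr0n.
rewrite -(ler_pM2l T_pos) mulrBr mulrA mulfV ?gt_eqF // mul1r.
by move: sum_le; rewrite big_split /= sumrN sumr_const_nat subn1 !mulr_natl.
Qed.

Theorem theorem1 :
  exists C : R, 0 < C /\
  forall (n : nat), (2 <= n)%N ->
  forall (L : R), 0 < L ->
  forall (f : vec n -> R),
    (forall x y : vec n, in_cube x -> in_cube y ->
       `|f x - f y| <= L * enorm (fun i => x i - y i)) ->
  forall (T : nat), (1 <= T)%N ->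
  forall (xs vs : nat -> vec n) (Ls : nat -> seq (cand n)),
    is_run L f T xs vs Ls ->
  forall xstar : vec n, in_cube xstar ->
    (T%:R)^-1 * (\sum_(1 <= t < T.+1) f (proj (xs t))) - f xstar
      <= C * L * Num.sqrt (n%:R) * rpow (T%:R) (- (n%:R)^-1).
Proof.
exists 31; split => // n n_ge2 L L_gt0 f f_lip T T_ge1 xs vs Ls run xstar xstar_cube.
have n_gt0 : (0 < n)%N by apply: leq_trans n_ge2.
have /andP[D_lb D_ub] := trunc_log_bounds (isT : (1 < 2)%N) T_ge1.
have thn : theta n ^+ n.-1.+1 = 2 by rewrite prednK // theta_exprn.
have wn : rpow (T%:R) (- (n%:R)^-1) ^+ n.-1.+1 * T%:R = 1.
  by rewrite prednK // rpow_Ninv_exprn.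
apply: mean_sub_le => //.
apply: le_trans (regret_sum_le (trunc_log 2 T) n_ge2 L_gt0 f_lip xstar_cube run T_ge1) _.
apply: (regret_budget_le T_ge1 D_lb (ltnW D_ub) thn (rpow_gt0 _ _) wn (rpow_gt0 _ _)).
- exact: ltW.
- exact: sqrtr_ge0.
- exact: root2_ge1 n_gt0 (theta_exprn n_gt0) (rpow_gt0 _ _).
- exact: root2_le3half n_gt0 (theta_exprn n_gt0) (rpow_gt0 _ _) n_ge2.
Qed.
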